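(* Let $A=[a_{ij}]$ be a real $n\times n$ matrix with zero diagonal and $f(\sigma)=\sum_{p=1}^{n-1}\sum_{q=p+1}^n a_{\sigma(p)\sigma(q)}$ its LOP objective function on $\Sigma_n$. Let $1\le k\le n$, let $i_1,\dots,i_k\in\{1,\dots,n\}$ be distinct, let $S_k=\{\sigma:\sigma(1)=i_1,\dots,\sigma(k)=i_k\}$ and $S_{k-1}=\{\sigma:\sigma(1)=i_1,\dots,\sigma(k-1)=i_{k-1}\}$, and set $\mu_k=\frac{1}{|S_k|}\sum_{\sigma\in S_k}f(\sigma)$, $\mu_{k-1}=\frac{1}{|S_{k-1}|}\sum_{\sigma\in S_{k-1}}f(\sigma)$. Then $$\mu_k-\mu_{k-1}=\frac12\sum_{j\in\{1,\dots,n\}\setminus\{i_1,\dots,i_k\}}\bigl(a_{i_kj}-a_{ji_k}\bigr).$$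
   Context: $\Sigma_n$ is the symmetric group on $\{1,\dots,n\}$; $\sigma(p)$ is the row/column index placed in position $p$; for $k=1$, $S_0=\Sigma_n$. *)

From HB Require Import structures.
From mathcomp Require Import all_boot all_order all_algebra all_fingroup.
Set Implicit Arguments. Unset Strict Implicit. Unset Printing Implicit Defensive.
Import Order.TTheory GRing.Theory Num.Theory.
Local Open Scope ring_scope.

(* Positions and row/column indices are 0-based ordinals 'I_n;
   sigma p is the index placed in position p. *)

Definition lop_obj (R : ringType) (n : nat) (A : 'M[R]_n) (s : 'S_n) : R :=
  \sum_(p : 'I_n) \sum_(q : 'I_n | (p < q)%N) A (s p) (s q).

Definition prefix_set (n : nat) (i : nat -> 'I_n) (m : nat) : {set 'S_n} :=
  [set s : 'S_n | [forall p : 'I_n, (p < m)%N ==> (s p == i p)]].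

Definition avg_over (R : fieldType) (n : nat) (f : 'S_n -> R) (S : {set 'S_n}) : R :=
  (\sum_(s in S) f s) / (#|S|)%:R.

From HB Require Import structures.
From mathcomp Require Import all_boot all_order all_algebra all_fingroup.
From mathcomp Require Import ring.
Import Order.TTheory GRing.Theory Num.Theory.
Set Implicit Arguments. Unset Strict Implicit.
Local Open Scope ring_scope.

(* Split f(sigma) by positions into pairs inside the fixed prefix [0, m),
   pairs with one end in the prefix, and pairs inside the free tail [m, n).
   On S_m the first two parts do not depend on sigma, and since composing with
   the transposition of two free positions is a bijection of S_m, the tail
   part averages to half the sum of A over all ordered pairs of free
   positions.  Hence mu_m = lop_cut m sigma for any sigma in S_m.  Comparing
   the cuts at m and m + 1 of one sigma in S_(m+1), only the antisymmetric
   row of i m over the free indices survives. *)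

Lemma sum_pairs_zero_diag (V : nmodType) (n : nat) (D : pred 'I_n)
    (F : 'I_n -> 'I_n -> V) :
  (forall p, F p p = 0) ->
  \sum_(p in D) \sum_(q in D) F p q
    = \sum_(p in D) \sum_(q in D | (p < q)%N) (F p q + F q p).
Proof.
move=> F0.
have row_split p : \sum_(q in D) F p q
    = \sum_(q in D | (p < q)%N) F p q + \sum_(q in D | (q < p)%N) F p q.
  rewrite !big_mkcondr -big_split; apply: eq_bigr => q _ /=.
  by case: ltngtP => [||/val_inj ->]; rewrite ?addr0 ?add0r ?F0.
under eq_bigr do rewrite row_split.
under [RHS]eq_bigr do rewrite big_split.
rewrite !big_split /= [X in _ = _ + X](exchange_big_dep (mem D)) /=;
  last by move=> p q _ /andP[].
congr (_ + _); apply: eq_bigr => p Dp; apply: eq_bigl => q.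
by rewrite Dp.
Qed.

Lemma tperm_fix_prefix n m (p q x : 'I_n) :
  (m <= p)%N -> (m <= q)%N -> (x < m)%N -> tperm p q x = x.
Proof.
move=> le_mp le_mq lt_xm.
by apply: tpermD; apply: contraTneq lt_xm => <-; rewrite -leqNgt.
Qed.

Lemma perm_fix_prefix_leq n m (u : 'S_n) (q : 'I_n) :
  (forall p : 'I_n, (p < m)%N -> u p = p) -> (m <= u q)%N = (m <= q)%N.
Proof.
move=> fix_u; have [lt_qm | le_mq] := ltnP q m.
  by rewrite fix_u // leqNgt lt_qm.
rewrite leqNgt; apply/negP => lt_uqm.
have uq_eq_q : u q = q by apply: (@perm_inj _ u); exact: fix_u.
by rewrite uq_eq_q ltnNge le_mq in lt_uqm.
Qed.

Section PrefixSet.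

Variables (n : nat) (i : nat -> 'I_n).

Lemma prefixP m (s : 'S_n) :
  reflect (forall p : 'I_n, (p < m)%N -> s p = i p) (s \in prefix_set i m).
Proof.
rewrite inE; apply: (iffP forallP) => [Hs p lt_pm | Hs p].
  by apply/eqP; move/implyP: (Hs p); apply.
by apply/implyP => lt_pm; rewrite Hs.
Qed.

Lemma prefix_set_sub m m' : (m <= m')%N -> prefix_set i m' \subset prefix_set i m.
Proof.
move=> le_mm'; apply/subsetP => s /prefixP Hs; apply/prefixP => p lt_pm.
by apply: Hs; apply: leq_trans le_mm'.
Qed.

(* [(u * s)%g p = s (u p)]: left factors act on positions. *)
Lemma prefix_set_mulg m (u s : 'S_n) :
  (forall p : 'I_n, (p < m)%N -> u p = p) ->
  ((u * s)%g \in prefix_set i m) = (s \in prefix_set i m).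
Proof.
move=> fix_u; apply/prefixP/prefixP => Hs p lt_pm.
  by rewrite -Hs // permM fix_u.
by rewrite permM fix_u // Hs.
Qed.

Lemma sum_prefix_mulg (V : nmodType) (G : 'S_n -> V) m (u : 'S_n) :
  (forall p : 'I_n, (p < m)%N -> u p = p) ->
  \sum_(s in prefix_set i m) G s = \sum_(s in prefix_set i m) G (u * s)%g.
Proof.
move=> fix_u; rewrite (reindex_inj (mulgI u)).
by apply: eq_bigl => s; rewrite prefix_set_mulg.
Qed.

Lemma mem_prefix_image m (s : 'S_n) (j : 'I_n) :
  (m <= n)%N -> s \in prefix_set i m ->
  (j \in [seq i t | t <- iota 0 m]) = ((s^-1)%g j < m)%N.
Proof.
move=> le_mn /prefixP Hs; apply/mapP/idP => [[t] | lt_jm].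
  rewrite mem_iota add0n => /andP[_ lt_tm] ->.
  have lt_tn : (t < n)%N := leq_trans lt_tm le_mn.
  have -> : i t = s (Ordinal lt_tn) by rewrite Hs.
  by rewrite permK.
by exists ((s^-1)%g j : nat); rewrite ?mem_iota // -Hs // permKV.
Qed.

Lemma sum_prefix_tail (V : nmodType) (phi : 'I_n -> V) m (s : 'S_n) :
  (m <= n)%N -> s \in prefix_set i m ->
  \sum_(q : 'I_n | (m <= q)%N) phi (s q)
    = \sum_(j | j \notin [seq i t | t <- iota 0 m]) phi j.
Proof.
move=> le_mn Ss; rewrite (reindex_inj (@perm_inj _ (s^-1)%g)).
apply: eq_big => [j | j _]; last by rewrite permKV.
by rewrite (mem_prefix_image j le_mn Ss) -leqNgt.
Qed.

Lemma prefix_set_inhabited m :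
  (m <= n)%N -> {in [pred t | (t < m)%N] &, injective i} ->
  exists s, s \in prefix_set i m.
Proof.
elim: m => [|m IH] le_mn inj_i; first by exists 1%g; apply/prefixP.
have inj_m : {in [pred t | (t < m)%N] &, injective i}.
  by apply: sub_in2 inj_i => t; rewrite !inE => /ltnW.
have [s Ss] := IH (ltnW le_mn) inj_m.
pose m0 := Ordinal le_mn; pose q := (s^-1)%g (i m).
have le_mq : (m <= q)%N.
  rewrite leqNgt -(mem_prefix_image _ (ltnW le_mn) Ss).
  apply/mapP => -[t]; rewrite mem_iota add0n => /andP[_ lt_tm] /inj_i.
  rewrite !inE ltnSn ltnS (ltnW lt_tm) => /(_ isT isT) eq_mt.
  by rewrite eq_mt ltnn in lt_tm.
exists (tperm m0 q * s)%g; apply/prefixP => p; rewrite ltnS leq_eqVlt.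
case/orP => [/eqP p_eq_m | lt_pm].
  have -> : p = m0 by apply: val_inj.
  by rewrite permM tpermL permKV.
have /prefixP -> // : (tperm m0 q * s)%g \in prefix_set i m.
by rewrite prefix_set_mulg // => x; apply: tperm_fix_prefix.
Qed.

End PrefixSet.

Section LopPrefix.

Variables (R : numFieldType) (n : nat) (A : 'M[R]_n).
Hypothesis A0 : forall j, A j j = 0.

Definition lop_cut m (s : 'S_n) : R :=
  \sum_(p : 'I_n | (p < m)%N) \sum_(q : 'I_n | (p < q)%N) A (s p) (s q)
  + 2^-1 * \sum_(p : 'I_n | (m <= p)%N) \sum_(q : 'I_n | (m <= q)%N) A (s p) (s q).

Lemma lop_obj_split m (s : 'S_n) :
  lop_obj A s =
    \sum_(p : 'I_n | (p < m)%N) \sum_(q : 'I_n | (p < q)%N) A (s p) (s q)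
  + \sum_(p : 'I_n | (m <= p)%N) \sum_(q : 'I_n | (p < q)%N) A (s p) (s q).
Proof.
rewrite /lop_obj (bigID (fun p : 'I_n => (p < m)%N)) /=.
by congr (_ + _); apply: eq_bigl => p; rewrite -leqNgt.
Qed.

Lemma sum_prefix_tail_pairs (i : nat -> 'I_n) m :
  \sum_(s in prefix_set i m)
      \sum_(p : 'I_n | (m <= p)%N) \sum_(q : 'I_n | (p < q)%N) A (s p) (s q)
  = 2^-1 * \sum_(s in prefix_set i m)
      \sum_(p : 'I_n | (m <= p)%N) \sum_(q : 'I_n | (m <= q)%N) A (s p) (s q).
Proof.
set S := prefix_set i m.
have swap : \sum_(s in S) \sum_(p : 'I_n | (m <= p)%N)
                \sum_(q : 'I_n | (p < q)%N) A (s q) (s p)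
          = \sum_(s in S) \sum_(p : 'I_n | (m <= p)%N)
                \sum_(q : 'I_n | (p < q)%N) A (s p) (s q).
  rewrite exchange_big [RHS]exchange_big; apply: eq_bigr => p le_mp.
  rewrite exchange_big [RHS]exchange_big; apply: eq_bigr => q lt_pq.
  rewrite (sum_prefix_mulg _ _ (u := tperm p q)) => [|x]; last first.
    by apply: tperm_fix_prefix => //; apply: leq_trans (ltnW lt_pq).
  by apply: eq_bigr => s _; rewrite !permM tpermL tpermR.
have -> : \sum_(s in S) \sum_(p : 'I_n | (m <= p)%N)
             \sum_(q : 'I_n | (m <= q)%N) A (s p) (s q)
        = \sum_(s in S) \sum_(p : 'I_n | (m <= p)%N)
             \sum_(q : 'I_n | (p < q)%N) (A (s p) (s q) + A (s q) (s p)).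
  apply: eq_bigr => s _.
  rewrite (sum_pairs_zero_diag _ (F := fun p q => A (s p) (s q))) //.
  apply: eq_bigr => p le_mp; apply: eq_bigl => q.
  case: ltnP => lt_pq; rewrite ?andbF ?andbT //.
  exact: leq_trans le_mp (ltnW lt_pq).
under [X in _ = _ * X]eq_bigr => s _ do
  (under eq_bigr => p _ do rewrite big_split; rewrite big_split).
by rewrite big_split /= swap -mulr2n -[X in _ * X]mulr_natl mulKf // pnatr_eq0.
Qed.

Lemma sum_prefix_lop (i : nat -> 'I_n) m :
  \sum_(s in prefix_set i m) lop_obj A s = \sum_(s in prefix_set i m) lop_cut m s.
Proof.
under eq_bigr do rewrite (lop_obj_split m).
by rewrite big_split sum_prefix_tail_pairs /lop_cut big_split /= -mulr_sumr.
Qed.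

Lemma lop_cut_mulg m (u s : 'S_n) :
  (forall p : 'I_n, (p < m)%N -> u p = p) -> lop_cut m (u * s)%g = lop_cut m s.
Proof.
move=> fix_u; rewrite /lop_cut; congr (_ + 2^-1 * _).
  apply: eq_bigr => p lt_pm; rewrite [RHS](reindex_inj (@perm_inj _ u)).
  apply: eq_big => [q | q _]; last by rewrite !permM fix_u.
  have [lt_qm | le_mq] := ltnP q m; first by rewrite fix_u.
  have le_muq : (m <= u q)%N by rewrite perm_fix_prefix_leq.
  by rewrite (leq_trans lt_pm le_mq) (leq_trans lt_pm le_muq).
rewrite [RHS](reindex_inj (@perm_inj _ u)).
apply: eq_big => [p | p _]; first by rewrite perm_fix_prefix_leq.
rewrite [RHS](reindex_inj (@perm_inj _ u)).
by apply: eq_big => [q | q _]; rewrite ?perm_fix_prefix_leq // !permM.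
Qed.

Lemma avg_prefix_lop (i : nat -> 'I_n) m (s : 'S_n) :
  s \in prefix_set i m -> avg_over (lop_obj A) (prefix_set i m) = lop_cut m s.
Proof.
move=> Ss; rewrite /avg_over sum_prefix_lop.
have -> : \sum_(t in prefix_set i m) lop_cut m t
        = \sum_(t in prefix_set i m) lop_cut m s.
  apply: eq_bigr => t /prefixP St; rewrite -(mulgKV s t) lop_cut_mulg // => p lt_pm.
  by move/prefixP: Ss => Ss; rewrite permM St // -Ss // permK.
rewrite sumr_const -[X in X / _]mulr_natr mulfK // pnatr_eq0 -lt0n.
by apply/card_gt0P; exists s.
Qed.

Lemma lop_cut_succ (m : 'I_n) (s : 'S_n) :
  lop_cut m.+1 s - lop_cut m s
    = 2^-1 * \sum_(q : 'I_n | (m < q)%N) (A (s m) (s q) - A (s q) (s m)).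
Proof.
have sum_ltS (H : 'I_n -> R) :
    \sum_(p : 'I_n | (p < m.+1)%N) H p = H m + \sum_(p : 'I_n | (p < m)%N) H p.
  rewrite (bigD1 m) //=; congr (_ + _); apply: eq_bigl => p.
  by rewrite ltnS leq_eqVlt -val_eqE /=; case: ltngtP.
have sum_geq (H : 'I_n -> R) :
    \sum_(p : 'I_n | (m <= p)%N) H p = H m + \sum_(p : 'I_n | (m < p)%N) H p.
  rewrite (bigD1 m) //=; congr (_ + _); apply: eq_bigl => p.
  by rewrite -val_eqE /=; case: ltngtP.
rewrite /lop_cut sum_ltS sum_geq sum_geq A0 add0r.
under [X in _ - (_ + _ * (_ + X))]eq_bigr do rewrite sum_geq.
by rewrite big_split /= sumrB; field.
Qed.

End LopPrefix.

Unset Implicit Arguments. Set Strict Implicit.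

Theorem proposition6 (R : realFieldType) (n : nat) (A : 'M[R]_n)
  (k : nat) (i : nat -> 'I_n) :
  (forall j : 'I_n, A j j = 0) ->
  (0 < k)%N -> (k <= n)%N ->
  {in [pred t | (t < k)%N] &, injective i} ->
  avg_over (lop_obj A) (prefix_set i k) - avg_over (lop_obj A) (prefix_set i k.-1)
  = 2^-1 * \sum_(j : 'I_n | j \notin [seq i t | t <- iota 0 k])
             (A (i k.-1) j - A j (i k.-1)).
Proof.
move=> A0 k_gt0 le_kn inj_i.
have [s Ss] := prefix_set_inhabited le_kn inj_i.
case: k k_gt0 le_kn inj_i Ss => // m _ lt_mn _ Ss /=.
have Ss' : s \in prefix_set i m := subsetP (prefix_set_sub i (leqnSn m)) s Ss.
pose m0 := Ordinal lt_mn.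
rewrite (avg_prefix_lop A0 Ss) (avg_prefix_lop A0 Ss') -[m]/(m0 : nat).
rewrite (lop_cut_succ A0) -(sum_prefix_tail _ lt_mn Ss).
by move/prefixP: Ss => ->.
Qed.
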